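(* Let $G$ be a finite simple graph with at least one edge. The following statements are equivalent: (1) $G$ has a matching that saturates every vertex of $\mathrm{core}(G)$; (2) $G$ has a minimum mitigating set which is a matching; (3) for every $S\subseteq \mathrm{core}(G)$, $\mathrm{es}_{\Delta}(G[N[S]])\leq \frac{|N[S]|}{2}$.
   Context: $\mathrm{core}(G)$ is the set of vertices of $G$ of maximum degree $\Delta(G)$. A set $S\subseteq E(G)$ is a mitigating set if $\Delta(G-S)\leq\Delta(G)-1$; a minimum mitigating set is one of minimum size. The $\Delta$-edge stability number $\mathrm{es}_{\Delta}(H)$ of a graph $H$ is the minimum number of edges whose removal results in a subgraph $H'$ with $\Delta(H')=\Delta(H)-1$. For $S\subseteq V(G)$, $N[S]=\bigcup_{v\in S}(N(v)\cup\{v\})$ is the closed neighborhood of $S$, and $G[N[S]]$ is the subgraph induced by it. *)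

(* A finite simple graph is a symmetric irreflexive relation
   e on a finType T; edges are 2-element sets {x,y} with e x y. *)
From mathcomp Require Import all_boot all_order.
Set Implicit Arguments. Unset Strict Implicit. Unset Printing Implicit Defensive.

Section Graphs.
Variables (T : finType) (e : rel T).

Definition edges (V : {set T}) : {set {set T}} :=
  [set [set x; y] | x in V, y in V & e x y].

Definition deg (V : {set T}) (F : {set {set T}}) (x : T) : nat :=
  #|[set y in V | e x y && ([set x; y] \notin F)]|.

Definition maxdeg (V : {set T}) (F : {set {set T}}) : nat :=
  \max_(x in V) deg V F x.

Definition Delta : nat := maxdeg setT set0.

Definition core : {set T} := [set x | deg setT set0 x == Delta].

Definition mitigating (F : {set {set T}}) : Prop :=
  F \subset edges setT /\ maxdeg setT F <= Delta - 1.

Definition min_mitigating (F : {set {set T}}) : Prop :=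
  mitigating F /\ forall F' : {set {set T}}, mitigating F' -> #|F| <= #|F'|.

Definition matching (M : {set {set T}}) : Prop :=
  M \subset edges setT /\
  forall A B, A \in M -> B \in M -> A != B -> [disjoint A & B].

Definition saturates (M : {set {set T}}) (S : {set T}) : Prop :=
  forall x, x \in S -> exists2 A, A \in M & x \in A.

Definition closed_nbhd (S : {set T}) : {set T} :=
  S :|: [set y | [exists x in S, e x y]].

Definition es_Delta (V : {set T}) : nat :=
  \big[minn/#|edges V|]_(F : {set {set T}} |
       (F \subset edges V) && (maxdeg V F == maxdeg V set0 - 1)) #|F|.

End Graphs.

From mathcomp Require Import all_boot all_order zify.
From Stdlib Require Import Classical.
Set Implicit Arguments. Unset Strict Implicit. Unset Printing Implicit Defensive.

(* Removing F lowers the maximum degree exactly when every core vertex lies on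
   an edge of F, so a minimum mitigating set is a minimum edge cover of the
   core; trading edges for a matching of G[core] shows that it has size
   |core| - nu(G[core]).  Hence (2) asks for a matching saturating the core
   that contains a maximum matching of G[core], and (2) => (1) is immediate.
   For (1) => (3), the edges of a core-saturating matching that lie inside
   N[S] form a mitigating set of G[N[S]].  For (3) => (2), a mitigating set of
   G[N[S]] is an edge cover of S, so (3) gives the Hall-type condition
   |S| <= 2 nu(G[S]) + |N[S] \ S| for all S in the core; an induction on
   |W| + |C|, splitting C along a tight subset or deleting a boundary vertex,
   turns this condition into a matching of G[W] saturating C and containing
   a maximum matching of G[C]. *)

Section CoreMatchings.
Variables (T : finType) (e : rel T).
Hypotheses (e_sym : symmetric e) (e_irr : irreflexive e).
Implicit Types (x y z : T) (A V W S C X : {set T}) (F M N : {set {set T}}).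

(** * Matchings of induced subgraphs *)

Lemma edgesP W A :
  reflect (exists x y, [/\ x \in W, y \in W, e x y & A = [set x; y]]) (A \in edges e W).
Proof.
apply: (iffP imset2P) => [[x y xW /[!inE] /andP[yW exy] ->]|[x [y [xW yW exy ->]]]].
  by exists x, y.
by exists x y => //; rewrite inE yW.
Qed.

Lemma edge_neq x y : e x y -> x != y.
Proof. by apply: contraTneq => ->; rewrite e_irr. Qed.

Lemma sub2set x y X : ([set x; y] \subset X) = (x \in X) && (y \in X).
Proof. by rewrite subUset !sub1set. Qed.

Lemma mem_edges W A : (A \in edges e W) = (A \in edges e setT) && (A \subset W).
Proof.
apply/edgesP/andP => [[x [y [xW yW exy ->]]]|[/edgesP[x [y [_ _ exy ->]]]]].
  by split; [apply/edgesP; exists x, y|rewrite sub2set xW].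
by rewrite sub2set => /andP[xW yW]; exists x, y.
Qed.

Lemma edge_sub W A : A \in edges e W -> A \subset W.
Proof. by rewrite mem_edges => /andP[]. Qed.

Lemma edges_restrict W W' A : A \in edges e W -> A \subset W' -> A \in edges e W'.
Proof. by rewrite !(mem_edges W') mem_edges => /andP[-> _]. Qed.

Lemma card_edge W A : A \in edges e W -> #|A| = 2.
Proof. by case/edgesP=> x [y [_ _ /edge_neq xy ->]]; rewrite cards2 xy. Qed.

Lemma edge_at W A x : A \in edges e W -> x \in A ->
  exists2 z, e x z & A = [set x; z].
Proof.
case/edgesP=> a [b [_ _ eab ->]] /set2P[]->; first by exists b.
by exists a; rewrite 1?e_sym // setUC.
Qed.

Lemma card_set2I x y X : x != y -> #|[set x; y] :&: X| = (x \in X) + (y \in X).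
Proof.
have card1I z : #|[set z] :&: X| = (z \in X).
  case: (boolP (z \in X)) => zX; first by rewrite (setIidPl _) ?cards1 ?sub1set.
  by rewrite disjoint_setI0 ?cards0 // disjoints1.
move=> xy; rewrite setIUl -!card1I; apply/eqP; rewrite (leq_card_setU _ _).2.
apply: disjointW (subsetIl _ X) (subsetIl _ X) _.
by rewrite disjoints1 inE.
Qed.

Lemma set2I_eq0 x y X : ([set x; y] :&: X == set0) = (x \notin X) && (y \notin X).
Proof. by rewrite setI_eq0 disjoints_subset subUset !sub1set !inE. Qed.

Lemma card_edgeI W A X : A \in edges e W -> A :&: X != set0 ->
  #|A :&: X| = (A \subset X).+1.
Proof.
case/edgesP=> x [y [_ _ /edge_neq xy ->]].
rewrite card_set2I // sub2set set2I_eq0.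
by case: (x \in X); case: (y \in X).
Qed.

Definition matching_in W M := M \subset edges e W /\ trivIset M.

Lemma cover_sub W M : M \subset edges e W -> cover M \subset W.
Proof. by move/subsetP=> sM; apply/bigcupsP=> A /sM/edge_sub. Qed.

Lemma matching_in0 W : matching_in W set0.
Proof. by split; [apply: sub0set|apply/trivIsetP=> A B; rewrite inE]. Qed.

Lemma matching_inS W M M' : M' \subset M -> matching_in W M -> matching_in W M'.
Proof. by move=> sM [sE tM]; split; [apply: subset_trans sE|apply: trivIsetS tM]. Qed.

Lemma matching_in_widen W W' M : W \subset W' -> matching_in W M -> matching_in W' M.
Proof.
move=> sW [/subsetP sM tM]; split=> //; apply/subsetP=> A /sM AE.
exact: edges_restrict AE (subset_trans (edge_sub AE) sW).
Qed.

Lemma matching_in_ssetI W X M : matching_in W M -> matching_in X (M ::&: X).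
Proof.
case=> /subsetP sM tM; split; last exact: trivIsetI.
by apply/subsetP=> A /setIdP[/sM AE AX]; apply: edges_restrict AE AX.
Qed.

Lemma matching_in_setU W M1 M2 : matching_in W M1 -> matching_in W M2 ->
  [disjoint cover M1 & cover M2] -> matching_in W (M1 :|: M2).
Proof.
move=> [sM1 tM1] [sM2 tM2] d12.
by split; [rewrite subUset sM1|apply: trivIsetU].
Qed.

Lemma matching_in_setU1 W M A : A \in edges e W -> matching_in W M ->
  [disjoint A & cover M] -> matching_in W (A |: M).
Proof.
move=> AE mM dA; apply: matching_in_setU mM _; last by rewrite cover1.
by split; [rewrite sub1set|apply: trivIset1].
Qed.

Lemma ssetI_sub M X : M ::&: X \subset M.
Proof. by apply/subsetP=> A /setIdP[]. Qed.

Lemma card_ssetI M X : #|M ::&: X| = \sum_(A in M) (A \subset X).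
Proof.
rewrite -sum1_card (eq_bigl (fun A => (A \in M) && (A \subset X))) => [|A]; last first.
  by rewrite inE.
by rewrite big_mkcondr; apply: eq_bigr => A _; case: (A \subset X).
Qed.

Lemma card_coverI M X : trivIset M -> #|cover M :&: X| = \sum_(A in M) #|A :&: X|.
Proof.
have [n] := ubnP #|M|; elim: n M => // n IH M ltMn tM.
have [->|[A AM]] := set_0Vmem M; first by rewrite /cover !big_set0 set0I cards0.
have ltM'n : #|M :\ A| < n by rewrite (cardsD1 A M) AM in ltMn.
rewrite (big_setD1 A AM) /= -IH ?trivIsetD // coverD1 //.
rewrite -(cardsID A (cover M :&: X)) setIDAC -setIA (setIidPr _) 1?setIC //.
by apply/subIset; rewrite bigcup_sup.
Qed.

Lemma card_cover_matching W M : matching_in W M -> #|cover M| = 2 * #|M|.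
Proof.
case=> /subsetP sM tM; rewrite -[cover M]setIT card_coverI //.
rewrite (eq_bigr (fun=> 2)) ?sum_nat_const 1?mulnC // => A AM.
by rewrite setIT (card_edge (sM _ AM)).
Qed.

Lemma card_meeting W M S : matching_in W M ->
    (forall A, A \in M -> A :&: S != set0) -> S \subset cover M ->
  #|S| = #|M| + #|M ::&: S|.
Proof.
case=> /subsetP sM tM mS sS.
rewrite -{1}(setIidPr sS) card_coverI // card_ssetI -sum1_card -big_split /=.
by apply: eq_bigr => A AM; rewrite (card_edgeI (sM _ AM) (mS _ AM)) add1n.
Qed.

Lemma matching_of_edge_cover W F S : F \subset edges e W -> S \subset cover F ->
  exists2 N, matching_in S N & #|S| <= #|F| + #|N|.
Proof.
have [n] := ubnP #|F|; elim: n F S => // n IH F S ltFn sF sS.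
have [F0|[A AF]] := set_0Vmem F.
  exists set0; first exact: matching_in0.
  by move: sS; rewrite F0 /cover big_set0 subset0 => /eqP->; rewrite cards0.
have AE := subsetP sF _ AF.
have cardF : #|F| = #|F :\ A|.+1 by rewrite (cardsD1 A F) AF.
have sS' : S :\: A \subset cover (F :\ A).
  apply/subsetP=> x /setDP[xS xA]; have /bigcupP[B BF xB] := subsetP sS x xS.
  by apply/bigcupP; exists B; rewrite // !inE BF andbT; apply: contraNneq xA => <-.
have [||N mN leN] := IH (F :\ A) (S :\: A) _ _ sS'.
- by rewrite cardF in ltFn.
- exact: subset_trans (subD1set F A) sF.
have mNS := matching_in_widen (subsetDl S A) mN.
have sNA : cover N \subset ~: A.
  by apply: subset_trans (cover_sub mN.1) _; rewrite setDE subsetIr.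
have cardS := cardsID A S.
have [AS|nAS] := boolP (A \subset S); last first.
  exists N => //; have : S :&: A \proper A.
    by rewrite properE subsetIr subsetI subxx andbT.
  move/proper_card; rewrite (card_edge AE); lia.
have [x xA] : exists x, x \in A by apply/set0Pn; rewrite -card_gt0 (card_edge AE).
have AN : A \notin N.
  apply/negP => AN; have := subsetP sNA x (subsetP (bigcup_sup A AN) x xA).
  by rewrite inE xA.
exists (A |: N).
  apply: matching_in_setU1 (edges_restrict AE AS) mNS _.
  by rewrite disjoint_sym disjoints_subset.
rewrite cardsU1 AN -cardS (setIidPr AS) (card_edge AE); lia.
Qed.

(** * A Hall-type theorem for saturating matchings *)

Definition boundary W S : {set T} := W :&: closed_nbhd e S :\: S.

Definition meeting M S := [set A in M | A :&: S != set0].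

(* Necessary for a matching of G[W] to saturate C: the edges of such a matching
   that meet S lie inside S or end in the boundary of S. *)
Definition hall_condition W C := forall S, S \subset C ->
  exists2 N, matching_in S N & #|S| <= 2 * #|N| + #|boundary W S|.

Definition tight W S :=
  forall N, matching_in S N -> 2 * #|N| + #|boundary W S| <= #|S|.

Definition optimal_saturating W C M := [/\ matching_in W M, C \subset cover M &
  forall N, matching_in C N -> #|N| <= #|M ::&: C|].

Lemma closed_nbhdP S y :
  reflect (y \in S \/ exists2 x, x \in S & e x y) (y \in closed_nbhd e S).
Proof.
rewrite !inE; apply: (iffP orP) => -[yS|]; [by left|move/existsP|by left|].
  by case=> x /andP[xS exy]; right; exists x.
by case=> x xS exy; right; apply/existsP; exists x; rewrite xS.
Qed.

Lemma sub_closed_nbhd S : S \subset closed_nbhd e S.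
Proof. by apply/subsetP=> x xS; apply/closed_nbhdP; left. Qed.

Lemma closed_nbhd_edge S x y : x \in S -> e x y -> y \in closed_nbhd e S.
Proof. by move=> xS exy; apply/closed_nbhdP; right; exists x. Qed.

Lemma closed_nbhdU S S' :
  closed_nbhd e (S :|: S') = closed_nbhd e S :|: closed_nbhd e S'.
Proof.
apply/setP=> y; rewrite in_setU; apply/closed_nbhdP/orP.
  case=> [/setUP[]|[x /setUP[]]] => [yS|yS'|xS exy|xS' exy].
  - by left; apply: (subsetP (sub_closed_nbhd S)).
  - by right; apply: (subsetP (sub_closed_nbhd S')).
  - by left; apply: closed_nbhd_edge exy.
  - by right; apply: closed_nbhd_edge exy.
case=> /closed_nbhdP[yS|[x xS exy]]; rewrite ?in_setU ?yS ?orbT; try by left.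
  by right; exists x; rewrite // in_setU xS.
by right; exists x; rewrite // in_setU xS orbT.
Qed.

Lemma boundary_sub W S : S :|: boundary W S \subset closed_nbhd e S.
Proof.
by rewrite subUset sub_closed_nbhd /boundary setDE -setIA !subIset ?subxx ?orbT.
Qed.

Lemma disjoint_boundary W S : [disjoint S & boundary W S].
Proof. by rewrite disjoints_subset; apply/subsetP=> x xS; rewrite !inE xS. Qed.

Lemma boundary_edge W S x y : x \in S -> y \in W -> e x y -> y \in S :|: boundary W S.
Proof.
move=> xS yW exy; rewrite in_setU; case: (boolP (y \in S)) => //= yS.
by rewrite /boundary !in_setD !in_setI yS yW (closed_nbhd_edge xS exy).
Qed.

Lemma edge_meeting_sub W S A : A \in edges e W -> A :&: S != set0 ->
  A \subset S :|: boundary W S.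
Proof.
case/edgesP=> x [y [xW yW exy ->]]; rewrite set2I_eq0 negb_and !negbK sub2set.
case/orP=> [xS|yS].
  by rewrite (boundary_edge xS yW exy) in_setU xS.
by rewrite (boundary_edge yS xW _) ?in_setU ?yS ?orbT // e_sym.
Qed.

Lemma matching_in_meeting W M S : matching_in W M -> matching_in W (meeting M S).
Proof. by apply: matching_inS; apply/subsetP=> A /setIdP[]. Qed.

Lemma cover_meeting M S : S \subset cover M -> S \subset cover (meeting M S).
Proof.
move=> sS; apply/subsetP=> x xS; have /bigcupP[A AM xA] := subsetP sS x xS.
by apply/bigcupP; exists A; rewrite // inE AM; apply/set0Pn; exists x; rewrite inE xA.
Qed.

Lemma tight_meeting W S M : tight W S -> matching_in W M -> S \subset cover M ->
  cover (meeting M S) = S :|: boundary W S /\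
  forall N, matching_in S N -> #|N| <= #|meeting M S ::&: S|.
Proof.
move=> tS mM sS; set M1 := meeting M S.
have mM1 : matching_in W M1 := matching_in_meeting S mM.
have meetS A : A \in M1 -> A :&: S != set0 by case/setIdP.
have sS1 : S \subset cover M1 := cover_meeting sS.
have sM1 : cover M1 \subset S :|: boundary W S.
  apply/bigcupsP=> A AM1.
  exact: edge_meeting_sub (subsetP mM1.1 _ AM1) (meetS _ AM1).
have cardS := card_meeting mM1 meetS sS1.
have cardM1 := card_cover_matching mM1.
have cardD := cardsID S (cover M1); rewrite (setIidPr sS1) in cardD.
have sD : cover M1 :\: S \subset boundary W S by rewrite subDset.
have tS1 := tS _ (matching_in_ssetI S mM1).
have eD : cover M1 :\: S = boundary W S.
  by apply/eqP; rewrite eqEcard sD; lia.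
split; first by rewrite -eD -{1}(setIidPr sS1) setID.
by move=> N /tS; rewrite -eD; lia.
Qed.

Lemma card_matching_split W C S N : S \subset C -> C \subset W -> matching_in C N ->
  #|N| <= #|N ::&: S| + #|N ::&: (C :\: closed_nbhd e S)| + #|C :&: boundary W S|.
Proof.
move=> SC CW [/subsetP sN tN]; set NS := closed_nbhd e S.
apply: (@leq_trans (#|N ::&: S| + #|N ::&: (C :\: NS)|
                    + #|cover N :&: (C :&: boundary W S)|)).
  rewrite card_coverI // !card_ssetI -sum1_card -!big_split /=; apply: leq_sum => A AN.
  have /edgesP[a [b [aC bC eab ->]]] := sN _ AN.
  have Nb : (a \in S) ==> (b \in NS) by apply/implyP => /closed_nbhd_edge; apply.
  have Na : (b \in S) ==> (a \in NS).
    by apply/implyP => /closed_nbhd_edge; apply; rewrite e_sym.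
  have [Saa Sbb] : ((a \in S) ==> (a \in NS)) /\ ((b \in S) ==> (b \in NS)).
    by split; apply/implyP/subsetP/sub_closed_nbhd.
  rewrite card_set2I ?edge_neq // !sub2set /boundary -/NS !(in_setD, in_setI) aC bC.
  rewrite (subsetP CW a aC) (subsetP CW b bC) /=.
  by move: Na Nb Saa Sbb; case: (a \in S); case: (b \in S); case: (a \in NS);
    case: (b \in NS).
by rewrite leq_add2l subset_leq_card ?subsetIr.
Qed.

Lemma card_meeting_ssetI W C S M : S \subset C -> matching_in W M ->
    boundary W S \subset cover (meeting M S) ->
  #|meeting M S ::&: S| + #|C :&: boundary W S| <= #|meeting M S ::&: C|.
Proof.
move=> SC mM sB; set M1 := meeting M S.
have [/subsetP sM1 tM1] := matching_in_meeting S mM.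
rewrite -(setIidPr (subset_trans (subsetIr C _) sB)) card_coverI // !card_ssetI.
rewrite -big_split /=; apply: leq_sum => A /[dup] AM1 /setIdP[_ AS].
move: AS; have /edgesP[a [b [aW bW eab ->]]] := sM1 _ AM1.
have [SCa SCb] : ((a \in S) ==> (a \in C)) /\ ((b \in S) ==> (b \in C)).
  by split; apply/implyP/subsetP.
rewrite set2I_eq0 negb_and !negbK card_set2I ?edge_neq // !sub2set.
rewrite /boundary !(in_setD, in_setI) aW bW; move: SCa SCb.
by case: (a \in S); case: (b \in S); case: (a \in C); case: (b \in C);
  case: (a \in closed_nbhd e S); case: (b \in closed_nbhd e S).
Qed.

Lemma boundary_setU W S S' :
  boundary W (S :|: S') \subset boundary W S :|: boundary (W :\: closed_nbhd e S) S'.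
Proof.
rewrite /boundary closed_nbhdU; move: (closed_nbhd e S) (closed_nbhd e S') => NS NS'.
apply/subsetP=> y; rewrite !inE.
by case: (y \in S); case: (y \in S'); case: (y \in W); case: (y \in NS);
  case: (y \in NS').
Qed.

Lemma hall_condition_split W C S : S \subset C -> C \subset W -> tight W S ->
  hall_condition W C -> hall_condition (W :\: closed_nbhd e S) (C :\: closed_nbhd e S).
Proof.
move=> SC CW tS hC S' sS'.
have S'NS : [disjoint S' & closed_nbhd e S].
  by rewrite disjoints_subset (subset_trans sS') // setDE subsetIr.
have SS'C : S :|: S' \subset C by rewrite subUset SC (subset_trans sS') ?subsetDl.
have [N mN leN] := hC _ SS'C.
have := card_matching_split (subsetUl S S') (subset_trans SS'C CW) mN.
have -> : (S :|: S') :\: closed_nbhd e S = S'.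
  rewrite setDUl (setDidPl S'NS) (_ : S :\: closed_nbhd e S = set0) ?set0U //.
  by apply/eqP; rewrite setD_eq0 sub_closed_nbhd.
have -> : (S :|: S') :&: boundary W S = set0.
  apply/eqP; rewrite setIUl setU_eq0 !setI_eq0 disjoint_boundary /=.
  by apply: disjointWr S'NS; apply: subset_trans (subsetUr S _) (boundary_sub W S).
rewrite cards0 addn0.
have cardSS' : #|S :|: S'| = #|S| + #|S'|.
  apply/eqP; rewrite (leq_card_setU _ _).2 disjoint_sym.
  exact: disjointWr (sub_closed_nbhd S) S'NS.
have := (leq_card_setU (boundary W S) (boundary (W :\: closed_nbhd e S) S')).1.
have := subset_leq_card (boundary_setU W S S').
have := tS _ (matching_in_ssetI S mN).
by exists (N ::&: S'); [apply: matching_in_ssetI mN|lia].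
Qed.

Lemma closed_nbhd_boundary W S : W :&: closed_nbhd e S \subset S :|: boundary W S.
Proof. by rewrite -subDset. Qed.

Lemma disjoint_of_cover W M M' : M \subset edges e W ->
  [disjoint cover M & cover M'] -> [disjoint M & M'].
Proof.
move=> /subsetP sM dM; rewrite -setI_eq0; apply/eqP/setP=> A; rewrite !inE.
apply/negP=> /andP[AM AM'].
have [x xA] : exists x, x \in A.
  by apply/set0Pn; rewrite -card_gt0 (card_edge (sM _ AM)).
have : x \in cover M' := subsetP (bigcup_sup A AM') x xA.
by rewrite (disjointFr dM (subsetP (bigcup_sup A AM) x xA)).
Qed.

Lemma optimal_saturating_glue W C S M1 M2 : S \subset C -> C \subset W -> tight W S ->
    matching_in W M1 -> S \subset cover M1 ->
    optimal_saturating (W :\: closed_nbhd e S) (C :\: closed_nbhd e S) M2 ->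
  optimal_saturating W C (meeting M1 S :|: M2).
Proof.
move=> SC CW tS mM1 sS [mM2 sC2 opt2].
set M1' := meeting M1 S; set C2 := C :\: closed_nbhd e S.
have [cM1' opt1] := tight_meeting tS mM1 sS.
have mM1' : matching_in W M1' := matching_in_meeting S mM1.
have dM : [disjoint cover M1' & cover M2].
  rewrite cM1' disjoint_sym disjoints_subset (subset_trans (cover_sub mM2.1)) //.
  by rewrite setDE subIset // setCS boundary_sub orbT.
split.
- exact: matching_in_setU mM1' (matching_in_widen (subsetDl _ _) mM2) dM.
- rewrite /cover bigcup_setU -/(cover M1') -/(cover M2) cM1'.
  rewrite -(setID C (closed_nbhd e S)).
  apply: setUSS sC2; apply: subset_trans (closed_nbhd_boundary W S).
  by apply: setSI CW.
move=> N mN.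
have := card_matching_split SC CW mN.
have := opt1 _ (matching_in_ssetI S mN).
have := opt2 _ (matching_in_ssetI C2 mN).
have sB : boundary W S \subset cover M1' by rewrite cM1' subsetUr.
have := card_meeting_ssetI SC mM1 sB.
suff : #|M1' ::&: C| + #|M2 ::&: C2| <= #|(M1' :|: M2) ::&: C|.
  by rewrite -/M1' -/C2; lia.
have dM12 : [disjoint M1' ::&: C & M2 ::&: C2].
  exact: disjointW (ssetI_sub _ _) (ssetI_sub _ _) (disjoint_of_cover mM1'.1 dM).
move: dM12; rewrite -(leq_card_setU _ _).2 => /eqP <-; apply: subset_leq_card.
apply/subsetP=> A; rewrite !inE => /orP[/andP[-> ->]//|/andP[-> AC2]].
by rewrite orbT (subset_trans AC2) ?subsetDl.
Qed.

Lemma optimal_saturating_perfect W C N : C \subset W -> matching_in C N ->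
  #|C| <= 2 * #|N| -> optimal_saturating W C N.
Proof.
move=> CW mN leC; have sN := cover_sub mN.1.
have eN : cover N = C by apply/eqP; rewrite eqEcard sN (card_cover_matching mN).
split; [exact: matching_in_widen mN|by rewrite eN|move=> N' mN'].
have := card_cover_matching mN'; have := subset_leq_card (cover_sub mN'.1).
suff -> : N ::&: C = N by lia.
by apply/setP=> A; rewrite inE andb_idr // => /(subsetP mN.1)/edge_sub.
Qed.

Lemma tight_optimal_saturating W C M : tight W C -> matching_in W M ->
  C \subset cover M -> optimal_saturating W C M.
Proof.
move=> tC mM sC; have [_ opt] := tight_meeting tC mM sC; split=> // N /opt leN.
apply: leq_trans leN (subset_leq_card _); apply/subsetP=> A.
by rewrite !inE => /andP[/andP[-> _] ->].
Qed.

Lemma not_tightP W S : ~ tight W S ->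
  exists2 N, matching_in S N & #|S| < 2 * #|N| + #|boundary W S|.
Proof.
move=> ntS; apply: NNPP => noN; apply: ntS => N mN; rewrite leqNgt.
by apply/negP => ltS; apply: noN; exists N.
Qed.

Lemma boundary_setD1 W S y : #|boundary W S| <= #|boundary (W :\ y) S|.+1.
Proof.
have -> : boundary (W :\ y) S = boundary W S :\ y.
  rewrite /boundary; move: (closed_nbhd e S) => NS; apply/setP=> z; rewrite !inE.
  by case: (z \in S); case: (z == y); case: (z \in W).
by rewrite (cardsD1 y (boundary W S)); case: (y \in boundary W S).
Qed.

Lemma hall_condition_setD1 W C y :
    (forall S, S \subset C -> S != set0 -> ~ tight W S) ->
  hall_condition (W :\ y) C.
Proof.
move=> ntC S SC; have [->|S0] := eqVneq S set0.
  by exists set0; rewrite ?cards0 //; apply: matching_in0.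
have [N mN ltS] := not_tightP (ntC S SC S0); exists N => //.
by have := boundary_setD1 W S y; lia.
Qed.

Lemma saturating_setU1 W C M x y : x \in W -> y \in W -> e x y ->
    matching_in (W :\ y) M -> C :\ x \subset cover M ->
  exists2 M', matching_in W M' & C \subset cover M'.
Proof.
move=> xW yW exy mM sC; have mMW := matching_in_widen (subsetDl W [set y]) mM.
have CxM M' : x \in cover M' -> cover M \subset cover M' -> C \subset cover M'.
  move=> xM' sM; apply/subsetP=> c cC; have [->//|cx] := eqVneq c x.
  by apply: (subsetP sM); apply: (subsetP sC); rewrite !inE cx.
have [xM|xM] := boolP (x \in cover M); first by exists M; last exact: CxM.
have xyE : [set x; y] \in edges e W by apply/edgesP; exists x, y.
exists ([set x; y] |: M).
  apply: matching_in_setU1 xyE mMW _; rewrite -setI_eq0 set2I_eq0 xM /=.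
  by apply/negP=> /(subsetP (cover_sub mM.1)); rewrite !inE eqxx.
apply: CxM; last by rewrite /cover bigcup_setU big_set1 subsetUr.
by rewrite /cover bigcup_setU big_set1 !inE eqxx.
Qed.

Lemma card_setD_closed_nbhd C S : S \subset C -> S != set0 ->
  #|C :\: closed_nbhd e S| < #|C|.
Proof.
move=> SC /set0Pn[s sS]; apply: proper_card.
rewrite properEneq subsetDl andbT; apply/eqP => /setP/(_ s).
by rewrite in_setD (subsetP SC s sS) (subsetP (sub_closed_nbhd S) s sS).
Qed.

Theorem hall_optimal_saturating W C : C \subset W -> hall_condition W C ->
  exists M, optimal_saturating W C M.
Proof.
have [n] := ubnP (#|W| + #|C|); elim: n W C => // n IH W C ltn CW hC.
(* Either C splits along N[S] for a tight proper part S, or no such part is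
   tight and deleting a boundary vertex y of C (together with a neighbour x of
   y in C when C itself is tight) keeps the condition. *)
have [[S [SC S0 SnC tS]]|noTight] :=
  classic (exists S, [/\ S \subset C, S != set0, S != C & tight W S]).
  set NS := closed_nbhd e S.
  have ltS : #|S| < #|C| by apply: proper_card; rewrite properEneq SnC.
  have [||M1 [mM1 sM1 _]] := IH W S _ (subset_trans SC CW) _.
  - lia.
  - by move=> S' /subset_trans/(_ SC); apply: hC.
  have ltC2 : #|C :\: NS| < #|C| := card_setD_closed_nbhd SC S0.
  have [|||M2 oM2] := IH (W :\: NS) (C :\: NS) _ _ _; last first.
  - by exists (meeting M1 S :|: M2); apply: optimal_saturating_glue.
  - exact: hall_condition_split.
  - exact: setSD.
  - by have := subset_leq_card (subsetDl W NS); lia.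
have slack S : S \subset C -> S != set0 -> S != C -> ~ tight W S.
  by move=> SC S0 SnC tS; apply: noTight; exists S.
have [bC0|[y /setDP[/setIP[yW yN] yC]]] := set_0Vmem (boundary W C).
  have [N mN] := hC C (subxx C); rewrite bC0 cards0 addn0 => leC.
  by exists N; apply: optimal_saturating_perfect.
have [yC'|[x xC exy]] := closed_nbhdP _ _ yN; first by rewrite yC' in yC.
have CWy : C \subset W :\ y by rewrite subsetD1 CW.
have ltW : #|W :\ y| < #|W| by rewrite (cardsD1 y W) yW.
have [tC|ntC] := classic (tight W C).
  have [|||M [mM sM _]] := IH (W :\ y) (C :\ x) _ _ _.
  - by have := subset_leq_card (subsetDl C [set x]); lia.
  - exact: subset_trans (subsetDl C _) CWy.
  - apply: hall_condition_setD1 => S /subsetP SCx S0; apply: slack => //.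
      by apply/subsetP=> z /SCx /setD1P[].
    by apply: contraTneq xC => eSC; apply/negP; rewrite -eSC => /SCx; rewrite !inE eqxx.
  have [M' mM' sM'] := saturating_setU1 (subsetP CW x xC) yW exy mM sM.
  by exists M'; apply: tight_optimal_saturating.
have [|||M [mM sM oM]] := IH (W :\ y) C _ _ _.
- lia.
- exact: CWy.
- apply: hall_condition_setD1 => S SC S0.
  by have [->//|] := eqVneq S C; apply: slack.
by exists M; split=> //; apply: matching_in_widen (subsetDl _ _) mM.
Qed.

(** * Degrees, mitigating sets and the Delta-edge stability number *)

Lemma deg_set0 V x : deg e V set0 x = #|[set y in V | e x y]|.
Proof. by apply: eq_card => y; rewrite !inE andbT. Qed.

Lemma deg_le_set0 V F x : deg e V F x <= deg e V set0 x.
Proof.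
rewrite deg_set0; apply: subset_leq_card; apply/subsetP=> y.
by rewrite !inE => /andP[-> /andP[-> _]].
Qed.

Lemma deg_set0S V V' x : V \subset V' -> deg e V set0 x <= deg e V' set0 x.
Proof.
move=> sV; rewrite !deg_set0; apply: subset_leq_card; apply/subsetP=> y.
by rewrite !inE => /andP[/(subsetP sV) -> ->].
Qed.

Lemma deg_le_maxdeg V F x : x \in V -> deg e V F x <= maxdeg e V F.
Proof. exact: leq_bigmax_cond. Qed.

Lemma deg_le_Delta x : deg e setT set0 x <= Delta e.
Proof. exact: deg_le_maxdeg. Qed.

Lemma maxdeg_le_Delta V : maxdeg e V set0 <= Delta e.
Proof.
apply/bigmax_leqP=> x _; apply: leq_trans (deg_le_Delta x).
exact: deg_set0S (subsetT V).
Qed.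

Lemma deg_ltP V F x : reflect (exists2 y, y \in V /\ e x y & [set x; y] \in F)
  (deg e V F x < deg e V set0 x).
Proof.
rewrite deg_set0; apply: (iffP idP) => [ltF|[y [yV exy] yF]].
  have /subsetPn[y] : ~~ ([set y in V | e x y] \subset
                          [set y in V | e x y && ([set x; y] \notin F)]).
    by apply: contraTN ltF => /subset_leq_card leF; rewrite -leqNgt.
  by rewrite !inE => /andP[yV exy]; rewrite yV exy negbK => yF; exists y.
apply: proper_card; rewrite properE; apply/andP; split.
  by apply/subsetP=> z; rewrite !inE => /andP[-> /andP[-> _]].
by apply/subsetPn; exists y; rewrite !inE ?yV ?exy ?yF.
Qed.

Lemma deg_matching V F x : trivIset F -> deg e V set0 x <= (deg e V F x).+1.
Proof.
move=> /trivIsetP tF; rewrite deg_set0.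
set D := [set y in V | e x y && ([set x; y] \in F)].
have sD : [set y in V | e x y] \subset
           [set y in V | e x y && ([set x; y] \notin F)] :|: D.
  by apply/subsetP=> y; rewrite !inE; case: (y \in V); case: (e x y); case: (_ \in F).
apply: leq_trans (subset_leq_card sD) _; rewrite -addn1.
apply: leq_trans (leq_card_setU _ _) _; rewrite leq_add2l.
apply/card_le1_eqP => y z; rewrite !inE => /and3P[_ exy yF] /and3P[_ exz zF].
have [Exyz|] := eqVneq [set x; y] [set x; z].
  have : y \in [set x; z] by rewrite -Exyz !inE eqxx orbT.
  by rewrite !inE => /orP[/eqP yx|/eqP //]; move: exy; rewrite yx e_irr.
by move/(tF _ _ yF zF)/disjointFr/(_ (set21 x y)); rewrite set21.
Qed.

Lemma nbr_mem_full_deg V x z : deg e setT set0 x <= deg e V set0 x -> e x z -> z \in V.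
Proof.
rewrite !deg_set0 => leV exz.
have eV : [set y in V | e x y] = [set y in setT | e x y].
  apply/eqP; rewrite eqEcard leV andbT.
  by apply/subsetP=> y; rewrite !inE => /andP[_ ->].
have : z \in [set y in setT | e x y] by rewrite !inE exz.
by rewrite -eV inE => /andP[].
Qed.

Lemma coreP x : reflect (deg e setT set0 x = Delta e) (x \in core e).
Proof. by rewrite inE; apply: eqP. Qed.

Lemma Delta_gt0 : edges e setT != set0 -> 0 < Delta e.
Proof.
case/set0Pn=> A /edgesP[x [y [_ _ exy _]]]; apply: leq_trans (deg_le_Delta x).
by rewrite deg_set0 card_gt0; apply/set0Pn; exists y; rewrite !inE.
Qed.

Lemma mitigatingP F : 0 < Delta e ->
  mitigating e F <-> F \subset edges e setT /\ core e \subset cover F.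
Proof.
move=> D0; split=> [[sF leF]|[sF sC]].
  split=> //; apply/subsetP=> x /coreP Dx.
  have /deg_ltP[y _ xyF] : deg e setT F x < deg e setT set0 x.
    by apply: leq_ltn_trans (deg_le_maxdeg F (in_setT x)) _; rewrite Dx; lia.
  by apply/bigcupP; exists [set x; y]; rewrite ?set21.
split=> //; apply/bigmax_leqP=> x _; have := deg_le_set0 setT F x.
have [xC|nxC] := boolP (x \in core e).
  have /bigcupP[A AF xA] := subsetP sC x xC.
  have [z exz Axz] := edge_at (subsetP sF A AF) xA; rewrite Axz in AF.
  have /deg_ltP : exists2 y, y \in setT /\ e x y & [set x; y] \in F by exists z.
  by move: xC => /coreP ->; lia.
have : deg e setT set0 x != Delta e by apply: contra nxC => /eqP/coreP.
by have := deg_le_Delta x; lia.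
Qed.

Lemma saturatesE M S : saturates M S <-> S \subset cover M.
Proof.
split=> [sat|/subsetP sS x /sS /bigcupP[A AM xA]]; last by exists A.
by apply/subsetP=> x /sat[A AM xA]; apply/bigcupP; exists A.
Qed.

Lemma matchingE M : matching e M <-> matching_in setT M.
Proof. by split=> -[sM /trivIsetP tM]. Qed.

Lemma closed_nbhdE S : closed_nbhd e S = S :|: boundary setT S.
Proof.
rewrite /boundary setTI setDE setUIr setUCr setIT.
by symmetry; apply/setUidPr/sub_closed_nbhd.
Qed.

Lemma card_closed_nbhd S : #|closed_nbhd e S| = #|S| + #|boundary setT S|.
Proof.
by rewrite closed_nbhdE; apply/eqP; rewrite (leq_card_setU _ _).2 disjoint_boundary.
Qed.

Lemma deg_closed_nbhd S x : x \in S ->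
  deg e (closed_nbhd e S) set0 x = deg e setT set0 x.
Proof.
move=> xS; apply/eqP; rewrite eqn_leq deg_set0S ?subsetT //= !deg_set0.
apply/subset_leq_card/subsetP=> y /setIdP[_ exy]; apply/setIdP.
by split=> //; apply: closed_nbhd_edge xS exy.
Qed.

Lemma es_Delta_le V F : F \subset edges e V -> maxdeg e V F = maxdeg e V set0 - 1 ->
  es_Delta e V <= #|F|.
Proof.
by move=> sF hF; apply: (@Order.TotalTheory.bigmin_le_cond _ nat); rewrite sF hF eqxx.
Qed.

Lemma es_Delta_cover S : 0 < Delta e -> S \subset core e ->
  exists F, [/\ F \subset edges e (closed_nbhd e S), S \subset cover F
              & #|F| <= es_Delta e (closed_nbhd e S)].
Proof.
move=> D0 SC; set V := closed_nbhd e S.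
have SV s : s \in S -> s \in V by apply/subsetP/sub_closed_nbhd.
have DS s : s \in S -> deg e V set0 s = Delta e.
  by move=> sS; rewrite deg_closed_nbhd //; apply/coreP/(subsetP SC).
rewrite /es_Delta; apply: (big_ind (fun m =>
  exists F, [/\ F \subset edges e V, S \subset cover F & #|F| <= m])).
- exists (edges e V); split=> //; apply/subsetP=> s sS.
  have : 0 < deg e V set0 s by rewrite DS.
  rewrite deg_set0 card_gt0 => /set0Pn[y /setIdP[yV esy]].
  apply/bigcupP; exists [set s; y]; rewrite ?set21 //.
  by apply/edgesP; exists s, y; rewrite SV.
- move=> a b [F1 [sF1 cF1 le1]] [F2 [sF2 cF2 le2]]; have [ab|ba] := leqP a b.
    by exists F1.
  by exists F2.
move=> F /andP[sF /eqP hF]; exists F; split=> //; apply/subsetP=> s sS.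
have /deg_ltP[y _ syF] : deg e V F s < deg e V set0 s.
  have := deg_le_maxdeg F (SV s sS); have := maxdeg_le_Delta V.
  by rewrite DS // hF; lia.
by apply/bigcupP; exists [set s; y]; rewrite ?set21.
Qed.

Lemma es_Delta_le_of_saturating M S : matching e M -> saturates M (core e) ->
  S \subset core e -> 2 * es_Delta e (closed_nbhd e S) <= #|closed_nbhd e S|.
Proof.
move=> /matchingE mM /saturatesE sC SC; set V := closed_nbhd e S; set F := M ::&: V.
have mF : matching_in V F := matching_in_ssetI V mM.
have := card_cover_matching mF; have := subset_leq_card (cover_sub mF.1).
suff : es_Delta e V <= #|F| by lia.
apply: es_Delta_le mF.1 _; have [S0|[s sS]] := set_0Vmem S.
  have -> : V = set0.
    apply/setP=> y; rewrite /V S0 in_set0.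
    by apply/closed_nbhdP=> -[|[x]]; rewrite in_set0.
  by rewrite /maxdeg !big_set0.
have sV : s \in V by apply: (subsetP (sub_closed_nbhd S)).
have Ds : deg e V set0 s = Delta e.
  by rewrite deg_closed_nbhd //; apply/coreP/(subsetP SC).
have -> : maxdeg e V set0 = Delta e.
  by apply/eqP; rewrite eqn_leq maxdeg_le_Delta -Ds deg_le_maxdeg.
apply/eqP; rewrite eqn_leq; apply/andP; split; last first.
  by have := deg_matching V s mF.2; have := deg_le_maxdeg F sV; rewrite Ds; lia.
(* A vertex of degree Delta in G[V] has all its neighbours in V, so the edge
   of M at it lies in F. *)
apply/bigmax_leqP=> x xV; have := deg_le_set0 V F x.
have [|DVx] := ltnP (deg e V set0 x) (Delta e); first by lia.
have := deg_set0S x (subsetT V); have := deg_le_Delta x => DGx GVx.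
have /bigcupP[A AM xA] : x \in cover M by apply/(subsetP sC)/coreP; lia.
have [z exz Axz] := edge_at (subsetP mM.1 _ AM) xA.
have zV : z \in V by apply: nbr_mem_full_deg exz; lia.
have /deg_ltP : exists2 y, y \in V /\ e x y & [set x; y] \in F.
  by exists z; rewrite // inE -Axz AM Axz sub2set xV zV.
lia.
Qed.

Lemma hall_condition_core : 0 < Delta e ->
    (forall S, S \subset core e ->
       2 * es_Delta e (closed_nbhd e S) <= #|closed_nbhd e S|) ->
  hall_condition setT (core e).
Proof.
move=> D0 h3 S SC; have [F [sF cF leF]] := es_Delta_cover D0 SC.
have [N mN leS] := matching_of_edge_cover sF cF; exists N => //.
by have := h3 S SC; rewrite card_closed_nbhd; lia.
Qed.

Lemma meeting_ssetI W M S : M \subset edges e W -> meeting M S ::&: S = M ::&: S.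
Proof.
move/subsetP=> sM; apply/setP=> A; rewrite !inE andbAC.
case: (boolP (A \in M)) => //= AM.
case: (boolP (A \subset S)) => //= AS.
by rewrite (setIidPl AS) -card_gt0 (card_edge (sM _ AM)).
Qed.

Lemma min_mitigating_meeting M : 0 < Delta e ->
  optimal_saturating setT (core e) M -> min_mitigating e (meeting M (core e)).
Proof.
move=> D0 [mM sC opt]; set MC := meeting M (core e).
have mMC : matching_in setT MC := matching_in_meeting _ mM.
have sCMC : core e \subset cover MC := cover_meeting sC.
split=> [|F /(mitigatingP _ D0)[sF cF]].
  exact/(mitigatingP _ D0)/(conj mMC.1 sCMC).
have [N /opt leN leC] := matching_of_edge_cover sF cF.
have meetC A : A \in MC -> A :&: core e != set0 by case/setIdP.
have := card_meeting mMC meetC sCMC.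
by rewrite (meeting_ssetI _ mM.1); lia.
Qed.

Lemma min_mitigating_matching_of_es_Delta : 0 < Delta e ->
    (forall S, S \subset core e ->
       2 * es_Delta e (closed_nbhd e S) <= #|closed_nbhd e S|) ->
  exists M, min_mitigating e M /\ matching e M.
Proof.
move=> D0 h3.
have [M oM] := hall_optimal_saturating (subsetT _) (hall_condition_core D0 h3).
exists (meeting M (core e)); split; first exact: min_mitigating_meeting.
by apply/matchingE/matching_in_meeting; case: oM.
Qed.

Lemma saturates_core_of_mitigating M : 0 < Delta e -> mitigating e M ->
  saturates M (core e).
Proof. by move=> D0 /(mitigatingP _ D0)[_ sC]; apply/saturatesE. Qed.

End CoreMatchings.

Theorem theorem2p3 (T : finType) (e : rel T) :
  symmetric e -> irreflexive e -> edges e setT != set0 ->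
  ((exists M, matching e M /\ saturates M (core e)) <->
   (exists M, min_mitigating e M /\ matching e M)) /\
  ((exists M, min_mitigating e M /\ matching e M) <->
   (forall S : {set T}, S \subset core e ->
      2 * es_Delta e (closed_nbhd e S) <= #|closed_nbhd e S|)).
Proof.
move=> e_sym e_irr /Delta_gt0 D0.
have h32 := min_mitigating_matching_of_es_Delta e_sym e_irr D0.
have h13 := es_Delta_le_of_saturating e_sym e_irr.
have h21 M : min_mitigating e M -> saturates M (core e).
  by case=> mitM _; exact (saturates_core_of_mitigating e_sym D0 mitM).
split; split.
- by case=> M [mM sM]; apply: h32 => S; apply: h13 mM sM.
- by case=> M [minM mM]; exists M; split; last exact: h21.
- by case=> M [minM mM] S; apply: h13 mM (h21 M minM).
- exact: h32.
Qed.
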